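(* Let $p=p_1p_2\cdots p_n$ be a permutation avoiding the pattern $1324$, and let $w(p)$ and $z(p)$ be the two words of length $n$ over $\{A,B,C,D\}$ defined in the context. Then for every $i\geq 1$: if the $i$th letter $A$ from the right in $w(p)$ is in the middle of a $CAB$-factor (i.e., it is immediately preceded by a letter $C$ and immediately followed by a letter $B$), then the $i$th segment of $z(p)$ from the left contains a letter $B$.
   Context: A permutation $p$ avoids $1324$ if there are no indices $i_1<i_2<i_3<i_4$ with $p_{i_1}<p_{i_3}<p_{i_2}<p_{i_4}$. An entry $p_i$ is a left-to-right minimum if it is smaller than all entries to its left, and a right-to-left maximum if it is larger than all entries to its right (these notions are also applied to subsequences). Coloring: scan $p$ from left to right; color $p_i$ blue if coloring it red would create a $132$-pattern consisting entirely of red entries (among the previously colored red entries together with $p_i$); otherwise color $p_i$ red. Then mark each entry with a letter: (1) a red entry that is a left-to-right minimum of the subsequence of red entries gets $A$; (2) a red entry that is not such a left-to-right minimum gets $B$; (3) a blue entry that is not a right-to-left maximum of the subsequence of blue entries gets $C$; (4) a blue entry that is a right-to-left maximum of the subsequence of blue entries gets $D$; (4') finally, every entry that is a right-to-left maximum of all of $p$ but not a left-to-right minimum of $p$ is colored blue and marked $D$, regardless of the earlier rules. The word $w(p)$ has as its $i$th letter the letter of $p_i$; the word $z(p)$ has as its $i$th letter the letter of the entry of value $i$. A segment of a word $v$ over $\{A,B,C,D\}$ is a factor (consecutive letters) that starts with a letter $A$ and ends immediately before the next letter $A$, or at the end of $v$. The $i$th segment from the left is the one starting at the $i$th letter $A$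 from the left. *)

(* Permutations are sequences of naturals that are
   permutations of 1..n; positions are 0-indexed. *)
From HB Require Import structures.
From mathcomp Require Import all_boot.
Set Implicit Arguments. Unset Strict Implicit. Unset Printing Implicit Defensive.

Inductive letter := LA | LB | LC | LD.

Definition letter_eqb (x y : letter) : bool :=
  match x, y with
  | LA, LA | LB, LB | LC, LC | LD, LD => true
  | _, _ => false
  end.

Lemma letter_eqP : Equality.axiom letter_eqb.
Proof. by case; case; constructor. Qed.

HB.instance Definition _ := hasDecEq.Build letter letter_eqP.

Definition is_perm (p : seq nat) : Prop := perm_eq p (iota 1 (size p)).

Definition contains1324 (p : seq nat) : Prop :=
  exists i1 i2 i3 i4, [/\ i1 < i2, i2 < i3, i3 < i4, i4 < size p &
    [/\ nth 0 p i1 < nth 0 p i3, nth 0 p i3 < nth 0 p i2 & nth 0 p i2 < nth 0 p i4]].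

Definition avoids1324 (p : seq nat) : Prop := ~ contains1324 p.

Definition has132 (s : seq nat) : bool :=
  has (fun i => has (fun j => has (fun k =>
     [&& i < j, j < k, nth 0 s i < nth 0 s k & nth 0 s k < nth 0 s j])
     (iota 0 (size s))) (iota 0 (size s))) (iota 0 (size s)).

(* red/blue colouring, scanning left to right; [reds] = red entries so far.
   true = red, false = blue. *)
Fixpoint colour_aux (reds : seq nat) (s : seq nat) : seq bool :=
  match s with
  | [::] => [::]
  | x :: s' =>
      if has132 (rcons reds x) then false :: colour_aux reds s'
      else true :: colour_aux (rcons reds x) s'
  end.

Definition colours (p : seq nat) : seq bool := colour_aux [::] p.

Definition is_red (p : seq nat) (j : nat) : bool := nth false (colours p) j.

Definition lrmin (p : seq nat) (i : nat) : bool :=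
  all (fun j => nth 0 p i < nth 0 p j) (iota 0 i).
Definition rlmax (p : seq nat) (i : nat) : bool :=
  all (fun j => nth 0 p j < nth 0 p i) (iota i.+1 (size p - i.+1)).

Definition letter_at (p : seq nat) (i : nat) : letter :=
  if rlmax p i && ~~ lrmin p i then LD
  else if is_red p i then
    (if all (fun j => is_red p j ==> (nth 0 p i < nth 0 p j)) (iota 0 i)
     then LA
     else LB)
  else if all (fun j => ~~ is_red p j ==> (nth 0 p j < nth 0 p i))
              (iota i.+1 (size p - i.+1))
     then LD
     else LC.

Definition wword (p : seq nat) : seq letter :=
  map (letter_at p) (iota 0 (size p)).

Definition zword (p : seq nat) : seq letter :=
  map (fun v => letter_at p (index v p)) (iota 1 (size p)).

Definition posA (v : seq letter) : seq nat :=
  [seq k <- iota 0 (size v) | nth LD v k == LA].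

(* the (i+1)-th segment of v from the left (i is 0-indexed): from the
   (i+1)-th A up to (not including) the next A, or to the end of v *)
Definition segment (v : seq letter) (i : nat) : seq letter :=
  let a := posA v in
  let s := nth 0 a i in
  let e := nth (size v) a i.+1 in
  take (e - s) (drop s v).

(* Red entries form a 132-avoiding subsequence, and an entry is blue exactly
   when it is the "2" of a 132 whose "1" and "3" are earlier red entries.  The
   entries marked A are left-to-right minima of the red subsequence, so their
   values decrease from left to right: the A's of z(p) list those of w(p) from
   right to left, and the i-th segment of z(p) starts at the value u of the
   i-th A from the right and ends before the value of the next A to its left.
   At a factor CAB at positions k-1, k, k+1, the blue C is the "2" of a 132
   with earlier reds t1 < t2; comparing p(k+1) with every earlier red entry
   and using 1324-avoidance (with a blue entry larger than p(k-1) to its right)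
   shows that p(k+1) lies below every red entry to the left of k.  Hence the
   smaller red entry witnessing the letter B at k+1 is p(k) itself, and the
   value p(k+1) > u lies before the start of the next segment. *)
From mathcomp Require Import all_boot.
From mathcomp Require Import zify.
Set Implicit Arguments. Unset Strict Implicit. Unset Printing Implicit Defensive.

Lemma has132P s : reflect (exists i j k, [/\ i < j, j < k, k < size s &
   nth 0 s i < nth 0 s k < nth 0 s j]) (has132 s).
Proof.
apply: (iffP idP).
- case/hasP => i; rewrite mem_iota => /andP[_ Hi] /hasP[j]; rewrite mem_iota => /andP[_ Hj].
  case/hasP => k; rewrite mem_iota => /andP[_ Hk] /and4P[h1 h2 h3 h4].
  exists i, j, k; split; try lia; by rewrite h3 h4.
- case=> i [j [k [h1 h2 h3 /andP[h4 h5]]]].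
  apply/hasP; exists i; first by rewrite mem_iota; lia.
  apply/hasP; exists j; first by rewrite mem_iota; lia.
  apply/hasP; exists k; first by rewrite mem_iota; lia.
  by rewrite h1 h2 h4 h5.
Qed.

Lemma has132_rcons s y a b : a < b -> b < size s ->
  nth 0 s a < y < nth 0 s b -> has132 (rcons s y).
Proof.
move=> hab hb hy; apply/has132P; exists a, b, (size s).
by rewrite size_rcons !nth_rcons ltnn eqxx (ltn_trans hab hb) hb.
Qed.

Lemma has132_rconsE s y : has132 (rcons s y) -> has132 s \/
  exists a b, [/\ a < b, b < size s & nth 0 s a < y < nth 0 s b].
Proof.
case/has132P => i [j [k [hij hjk hk]]]; rewrite size_rcons in hk; rewrite !nth_rcons.
have -> : i < size s by lia.
have -> : j < size s by lia.
case: (ltnP k (size s)) => hks hv.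
- by left; apply/has132P; exists i, j, k; split.
- have k_eq : (k == size s) = true by apply/eqP; lia.
  by rewrite k_eq in hv; right; exists i, j; split => //; lia.
Qed.

Lemma map_nth_filter_cons (b : bool) c (s : seq nat) x j :
  map (nth 0 (x :: s)) [seq t <- iota 0 j.+1 | nth false (b :: c) t] =
  (if b then [:: x] else [::]) ++ map (nth 0 s) [seq t <- iota 0 j | nth false c t].
Proof.
have -> : iota 0 j.+1 = 0 :: map (addn 1) (iota 0 j) by rewrite -iotaDl.
rewrite /= filter_map.
have -> : [seq t <- iota 0 j | preim (addn 1) (nth false (b :: c)) t] =
          [seq t <- iota 0 j | nth false c t].
  by apply: eq_filter => t /=; rewrite ?add1n.
have shift : map (nth 0 (x :: s)) (map (addn 1) [seq t <- iota 0 j | nth false c t]) =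
              map (nth 0 s) [seq t <- iota 0 j | nth false c t].
  by rewrite -map_comp; apply: eq_map => t /=; rewrite ?add1n.
by case: b => /=; rewrite shift.
Qed.

Lemma nth_colour_aux reds s j : j < size s ->
  nth false (colour_aux reds s) j =
  ~~ has132 (rcons (reds ++ map (nth 0 s)
      [seq t <- iota 0 j | nth false (colour_aux reds s) t]) (nth 0 s j)).
Proof.
elim: s reds j => [|x s IH] reds j //= hj; case: j hj => [|j] hj.
- by rewrite cats0; case: has132.
- case: (has132 (rcons reds x)); rewrite map_nth_filter_cons /=; first exact: IH.
  by rewrite -cat_rcons; apply: IH.
Qed.

Section Colouring.

Variable p : seq nat.

Lemma is_redE j : j < size p -> is_red p j =
  ~~ has132 (rcons (map (nth 0 p) [seq t <- iota 0 j | is_red p t]) (nth 0 p j)).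
Proof. exact: (@nth_colour_aux [::]). Qed.

Let red_prefix j := [seq t <- iota 0 j | is_red p t].

Let nth_red_prefix_mono j a b : a < b -> b < size (red_prefix j) ->
  nth 0 (red_prefix j) a < nth 0 (red_prefix j) b.
Proof.
have sorted_prefix : sorted ltn (red_prefix j).
  by apply: sorted_filter; [exact: ltn_trans | exact: iota_ltn_sorted].
by move=> hab hb; apply: (sorted_ltn_nth ltn_trans 0 sorted_prefix); rewrite ?inE; lia.
Qed.

Let mem_nth_red_prefix j a : a < size (red_prefix j) ->
  nth 0 (red_prefix j) a < j /\ is_red p (nth 0 (red_prefix j) a).
Proof.
move=> ha; have := mem_nth 0 ha.
by rewrite mem_filter mem_iota add0n => /andP[-> /andP[_ ->]].
Qed.

Lemma red_not_mid132 j t1 t2 : j < size p -> is_red p j -> t1 < t2 -> t2 < j ->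
  is_red p t1 -> is_red p t2 -> ~~ (nth 0 p t1 < nth 0 p j < nth 0 p t2).
Proof.
move=> hj rj h12 h2j r1 r2; apply/negP => hmid.
move: rj; rewrite is_redE // => /negP; apply.
have m1 : t1 \in red_prefix j by rewrite mem_filter r1 mem_iota; lia.
have m2 : t2 \in red_prefix j by rewrite mem_filter r2 mem_iota; lia.
apply: (@has132_rcons _ _ (index t1 (red_prefix j)) (index t2 (red_prefix j))).
- case: ltngtP => // [lt21 | eq12].
  + by have := @nth_red_prefix_mono j _ _ lt21; rewrite index_mem !nth_index // => /(_ m1); lia.
  + by move/(congr1 (nth 0 (red_prefix j))): eq12; rewrite !nth_index //; lia.
- by rewrite size_map index_mem.
- by rewrite !(nth_map 0) ?index_mem // !nth_index.
Qed.

Lemma blue_mid132 j : j < size p -> ~~ is_red p j -> exists t1 t2,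
  [/\ t1 < t2, t2 < j, is_red p t1, is_red p t2 & nth 0 p t1 < nth 0 p j < nth 0 p t2].
Proof.
move=> hj; rewrite is_redE // negbK -/(red_prefix j).
case/has132_rconsE => [/has132P [a [b [c [hab hbc]]]] | [a [b [hab]]]];
  rewrite size_map => hc; rewrite !(nth_map 0); try lia.
- move=> hmid; exfalso.
  have [hcj rc] := mem_nth_red_prefix hc.
  have [_ ra] := @mem_nth_red_prefix j a ltac:(lia).
  have [_ rb] := @mem_nth_red_prefix j b ltac:(lia).
  have := red_not_mid132 (ltn_trans hcj hj) rc
    (@nth_red_prefix_mono j a b hab ltac:(lia)) (nth_red_prefix_mono hbc hc) ra rb.
  by rewrite hmid.
- move=> hmid; exists (nth 0 (red_prefix j) a), (nth 0 (red_prefix j) b).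
  have [_ ra] := @mem_nth_red_prefix j a ltac:(lia).
  have [hbj rb] := mem_nth_red_prefix hc.
  by split => //; apply: nth_red_prefix_mono.
Qed.

Lemma letter_atA j : letter_at p j = LA -> is_red p j /\
  forall t, t < j -> is_red p t -> nth 0 p j < nth 0 p t.
Proof.
rewrite /letter_at; case: ifP => // _; case: ifP => rj; last by case: ifP.
case: ifP => // /allP hmin _; split => // t ht rt.
by apply: (implyP (hmin t _)); rewrite ?mem_iota.
Qed.

Lemma letter_atA_decreasing x y : x < y -> letter_at p x = LA -> letter_at p y = LA ->
  nth 0 p y < nth 0 p x.
Proof. by move=> hxy /letter_atA[rx _] /letter_atA[_ /(_ x hxy rx)]. Qed.

Hypothesis p_uniq : uniq p.

Lemma letter_atB j : j < size p -> letter_at p j = LB -> is_red p j /\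
  exists t, [/\ t < j, is_red p t & nth 0 p t < nth 0 p j].
Proof.
move=> hj; rewrite /letter_at; case: ifP => // _; case: ifP => rj; last by case: ifP.
case: ifP => // /negbT /allPn [t]; rewrite mem_iota add0n => /andP[_ ht].
rewrite negb_imply -leqNgt => /andP[rt hle] _; split => //; exists t; split => //.
by rewrite ltn_neqAle hle andbT nth_uniq ?(ltn_eqF ht) // (ltn_trans ht hj).
Qed.

Lemma letter_atC j : letter_at p j = LC -> ~~ is_red p j /\
  exists q, [/\ j < q, q < size p, ~~ is_red p q & nth 0 p j < nth 0 p q].
Proof.
rewrite /letter_at; case: ifP => // _; case: ifP => rj; first by case: ifP.
case: ifP => // /negbT /allPn [q]; rewrite mem_iota => /andP[hjq hq].
rewrite negb_imply -leqNgt => /andP[bq hle] _.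
have {}hq : q < size p by lia.
split => //; exists q; split => //.
by rewrite ltn_neqAle hle andbT nth_uniq ?(ltn_eqF hjq) // (ltn_trans hjq hq).
Qed.

Hypothesis p_avoids1324 : avoids1324 p.

Section CAB.

Variable k : nat.
Hypotheses (k_gt0 : 0 < k) (k1_lt_size : k.+1 < size p).
Hypotheses (kC : letter_at p k.-1 = LC) (kA : letter_at p k = LA)
           (kB : letter_at p k.+1 = LB).

Lemma CAB_lt_red r : r < k -> is_red p r -> nth 0 p k.+1 < nth 0 p r.
Proof.
have nth_lt_of_leq x y : x < size p -> y < size p -> x != y ->
    nth 0 p x <= nth 0 p y -> nth 0 p x < nth 0 p y.
  by move=> hx hy hxy hle; rewrite ltn_neqAle hle andbT nth_uniq.
move=> hrk rr.
have [bk1 [q [hq1 hq2 bq hq3]]] := letter_atC kC.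
have [rk1 _] := letter_atB k1_lt_size kB.
have [t1 [t2 [h12 h2 r1 r2 /andP[v1 v2]]]] := @blue_mid132 k.-1 ltac:(lia) bk1.
have hqk : q != k by apply: contraNneq bq => ->; have [] := letter_atA kA.
have hqk1 : q != k.+1 by apply: contraNneq bq => ->.
have lt_t2 : nth 0 p k.+1 < nth 0 p t2.
  rewrite ltnNge; apply/negP => /nth_lt_of_leq lt2; have {}lt2 := lt2 ltac:(lia) ltac:(lia) ltac:(lia).
  by apply: p_avoids1324; exists t1, t2, k.-1, k.+1; split; try split; lia.
have lt_t1 : nth 0 p k.+1 < nth 0 p t1.
  have := red_not_mid132 k1_lt_size rk1 h12 ltac:(lia) r1 r2.
  by rewrite lt_t2 andbT -leqNgt => /nth_lt_of_leq; apply; lia.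
rewrite ltnNge; apply/negP => /nth_lt_of_leq lt_r; have {}lt_r := lt_r ltac:(lia) ltac:(lia) ltac:(lia).
(* r < t2 makes p(k+1) the "2" of a red 132; t2 < r gives the 1324 r, k-1, k+1, q. *)
case: (ltngtP r t2) => hrt.
- by have := red_not_mid132 k1_lt_size rk1 hrt ltac:(lia) rr r2; rewrite lt_r lt_t2.
- have hrk1 : r != k.-1 by apply: contraTneq rr => ->.
  by apply: p_avoids1324; exists r, k.-1, k.+1, q; split; try split; lia.
- by move: lt_r; rewrite hrt; lia.
Qed.

Lemma CAB_lt : nth 0 p k < nth 0 p k.+1.
Proof.
have [_ [t [htk rt lt_t]]] := letter_atB k1_lt_size kB.
case: (ltngtP t k) => [t_lt_k | k_lt_t | t_eq_k].
- by have := CAB_lt_red t_lt_k rt; lia.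
- by lia.
- by move: lt_t; rewrite t_eq_k.
Qed.

End CAB.

End Colouring.

Lemma nth_wword p j : j < size p -> nth LD (wword p) j = letter_at p j.
Proof. by move=> hj; rewrite (nth_map 0) ?size_iota // nth_iota. Qed.

Lemma nth_zword p v : 0 < v <= size p ->
  nth LD (zword p) v.-1 = letter_at p (index v p).
Proof.
by move=> hv; rewrite (nth_map 0) ?size_iota ?nth_iota ?add1n ?prednK //; lia.
Qed.

Lemma mem_posA_wword p x : (x \in posA (wword p)) = (x < size p) && (letter_at p x == LA).
Proof.
rewrite mem_filter mem_iota size_map size_iota /= andbC.
by case: ltnP => hx //; rewrite nth_wword.
Qed.

Lemma sorted_posA v : sorted ltn (posA v).
Proof. by apply: sorted_filter; [exact: ltn_trans | exact: iota_ltn_sorted]. Qed.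

Lemma is_perm_uniq p : is_perm p -> uniq p.
Proof. by move=> hp; rewrite (perm_uniq hp) iota_uniq. Qed.

Lemma is_perm_mem p v : is_perm p -> (v \in p) = (0 < v <= size p).
Proof. by move=> hp; rewrite (perm_mem hp) mem_iota; lia. Qed.

Lemma is_perm_nth p j : is_perm p -> j < size p -> 0 < nth 0 p j <= size p.
Proof. by move=> hp hj; rewrite -is_perm_mem ?mem_nth. Qed.

Lemma posA_zword p : is_perm p ->
  posA (zword p) = rev [seq (nth 0 p j).-1 | j <- posA (wword p)].
Proof.
move=> hp; have hu := is_perm_uniq hp.
apply: (irr_sorted_eq ltn_trans ltnn); first exact: sorted_posA.
- rewrite rev_sorted; apply: (homo_sorted_in (P := mem (posA (wword p)))).
  + move=> x y; rewrite !mem_posA_wword => /andP[hx /eqP xA] /andP[hy /eqP yA] /= hxy.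
    have := letter_atA_decreasing hxy xA yA.
    have := is_perm_nth hp hx; have := is_perm_nth hp hy; lia.
  + exact/allP.
  + exact: sorted_posA.
- move=> v; rewrite mem_rev mem_filter mem_iota size_map size_iota add0n /= andbC.
  apply/andP/mapP => [[hv /eqP vA] | [x]].
  + rewrite -[v]/(v.+1.-1) nth_zword // in vA.
    exists (index v.+1 p); last by rewrite nth_index ?is_perm_mem.
    by rewrite mem_posA_wword vA eqxx andbT index_mem is_perm_mem //; lia.
  + rewrite mem_posA_wword => /andP[hx /eqP xA] ->.
    have := is_perm_nth hp hx => hpx.
    by rewrite nth_zword // index_uniq //; split; [lia | rewrite xA].
Qed.

Lemma nth_mem_segment v i j : nth 0 (posA v) i <= j < size v ->
  {in posA v, forall a, nth 0 (posA v) i < a -> j < a} ->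
  nth LD v j \in segment v i.
Proof.
move=> /andP[hsj hj] hnext; rewrite /segment.
set s := nth 0 (posA v) i in hsj hnext *; set e := nth (size v) (posA v) i.+1.
have hje : j < e.
  case: (ltnP i.+1 (size (posA v))) => hi; last by rewrite /e nth_default.
  rewrite /e (set_nth_default 0) //; apply: hnext; first exact: mem_nth.
  by apply: (sorted_ltn_nth ltn_trans 0 (sorted_posA v)); rewrite ?inE //; lia.
have -> : nth LD v j = nth LD (take (e - s) (drop s v)) (j - s).
  by rewrite nth_take ?nth_drop ?subnKC //; lia.
apply: mem_nth; rewrite size_take size_drop.
by case: ifP => _; apply: ltn_sub2r => //; apply: leq_ltn_trans hsj _.
Qed.

Theorem lemma3p1 (p : seq nat) (i : nat) :
  is_perm p -> avoids1324 p ->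
  1 <= i -> i <= size (posA (wword p)) ->
  let k := nth 0 (rev (posA (wword p))) i.-1 in
  0 < k ->
  nth LD (wword p) k.-1 = LC ->
  nth LD (wword p) k.+1 = LB ->
  LB \in segment (zword p) i.-1.
Proof.
move=> hp hav hi hiA k k_gt0 kC kB.
have hu := is_perm_uniq hp.
have k_posA : k \in posA (wword p) by rewrite -mem_rev mem_nth // size_rev prednK.
move: (k_posA); rewrite mem_posA_wword => /andP[hk /eqP kA].
have hk1 : k.+1 < size p.
  by case: ltnP => // h; rewrite nth_default ?size_map ?size_iota in kB.
rewrite !nth_wword // in kC kB; try lia.
have lt_k1 := CAB_lt hu hav k_gt0 hk1 kC kA kB.
have hpk := is_perm_nth hp hk.
have hpk1 := is_perm_nth hp hk1.
have <- : nth LD (zword p) (nth 0 p k.+1).-1 = LB by rewrite nth_zword ?index_uniq.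
have start : nth 0 (posA (zword p)) i.-1 = (nth 0 p k).-1.
  by rewrite posA_zword // -map_rev (nth_map 0) // size_rev; lia.
apply: nth_mem_segment; rewrite start.
  by rewrite size_map size_iota; lia.
move=> a; rewrite posA_zword // mem_rev => /mapP[k']; rewrite mem_posA_wword.
move=> /andP[hk' /eqP k'A] -> lt_a.
have hk'k : k' < k.
  case: (ltngtP k' k) => // hkk'; last by move: lt_a; rewrite hkk'; lia.
  by have := letter_atA_decreasing hkk' kA k'A; lia.
have [rk' _] := letter_atA k'A.
by have := CAB_lt_red hu hav k_gt0 hk1 kC kA kB hk'k rk'; lia.
Qed.
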